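(* For every integer $j\ge0$, in $\mathbb{Z}[q,q^{-1}][[y]]$, \[ (-1)^jq^{-\binom{j+1}{2}}y^{-j}\sum_{i\ge j}(-1)^iq^{\binom{i+1}{2}}\begin{bmatrix} i\\ j\end{bmatrix}y^i\prod_{r=1}^{i+1}\frac{1}{1-q^{r+j}y}=1. \]
   Context: $[m]=1+q+\dots+q^{m-1}$, $[m]!=\prod_{s=1}^m[s]$, and $\begin{bmatrix} i\\ j\end{bmatrix}=\frac{[i]!}{[j]![i-j]!}$ is the Gaussian binomial coefficient. Note $y^{-j}y^i=y^{i-j}$ with $i\ge j$, so each summand is a power series in $y$, and the sum converges $y$-adically. *)

From HB Require Import structures.
From mathcomp Require Import all_boot all_order all_algebra.
From mathcomp Require Import fraction.
Set Implicit Arguments. Unset Strict Implicit. Unset Printing Implicit Defensive.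
Import Order.TTheory GRing.Theory Num.Theory.
Local Open Scope ring_scope.

(* formal power series in y: f n = coefficient of y^n *)
Definition pser (R : comRingType) := nat -> R.

Definition ps_one (R : comRingType) : pser R := fun n => (n == 0%N)%:R.

Definition ps_mul (R : comRingType) (f g : pser R) : pser R :=
  fun n => \sum_(k < n.+1) f k * g (n - k)%N.

Definition ps_scale (R : comRingType) (c : R) (f : pser R) : pser R :=
  fun n => c * f n.

Definition ps_yshift (R : comRingType) (m : nat) (f : pser R) : pser R :=
  fun n => if (m <= n)%N then f (n - m)%N else 0.

(* 1/(1 - a y) = \sum_n a^n y^n, the inverse of 1 - a y in R[[y]] *)
Definition ps_inv1m (R : comRingType) (a : R) : pser R := fun n => a ^+ n.

Definition ps_prod (R : comRingType) (s : seq (pser R)) : pser R :=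
  foldr (@ps_mul R) (@ps_one R) s.

(* y-adic sum \sum_(i >= j) F i, valid when F i has y-order >= i - j:
   the coefficient of y^n only receives contributions from j <= i <= j + n *)
Definition ps_ysum_from (R : comRingType) (j : nat) (F : nat -> pser R) : pser R :=
  fun n => \sum_(j <= i < j + n.+1) F i n.

(* the coefficient ring: Z[q,q^{-1}] embedded in its fraction field Q(q) *)
Definition Kq := {fraction {poly int}}.
Definition q : Kq := tofrac ('X : {poly int}).

Definition qint (m : nat) : Kq := \sum_(s < m) q ^+ s.
Definition qfact (m : nat) : Kq := \prod_(1 <= s < m.+1) qint s.
Definition qbinom (i j : nat) : Kq := qfact i / (qfact j * qfact (i - j)).

(* The coefficient of y^m in
   prod_(r = s)^(s + M) 1 / (1 - q^(r+j) y) is q^((s+j) m) [M+m, m], by induction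
   on M and the q-hockey-stick identity.  Writing i = j + k, the identity
   [j+k, j] [j+n, n-k] = [j+n, n] [n, k] and C(j+k+1, 2) + (j+1)(n-k) =
   C(j+1, 2) + (j+1) n + C(k, 2) pull everything independent of k out of the sum,
   leaving q^(C(j+1,2) + (j+1) n) [j+n, n] sum_k (-1)^k q^C(k,2) [n, k], and this
   alternating sum telescopes to [n = 0] by the q-Pascal rule. *)

From HB Require Import structures.
From mathcomp Require Import all_boot all_order all_algebra.
From mathcomp Require Import fraction.
From mathcomp Require Import ring zify.
From Stdlib Require Import FunctionalExtensionality.

Set Implicit Arguments.
Unset Strict Implicit.
Unset Printing Implicit Defensive.
Import Order.TTheory GRing.Theory Num.Theory.
Local Open Scope ring_scope.

Lemma bin2D m n : 'C(m + n, 2) = ('C(m, 2) + m * n + 'C(n, 2))%N.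
Proof. by elim: m => [|m IH]; rewrite ?bin0n // addSn binS IH bin1 binS bin1; lia. Qed.

Section GaussianBinomial.

Variables (R : comNzRingType) (x : R).

Fixpoint gbinom (n k : nat) : R :=
  match n, k with
  | _, 0%N => 1
  | 0%N, _.+1 => 0
  | n.+1, k.+1 => gbinom n k + x ^+ k.+1 * gbinom n k.+1
  end.

Lemma gbinom0 n : gbinom n 0 = 1. Proof. by case: n. Qed.

Lemma gbinomS n k : gbinom n.+1 k.+1 = gbinom n k + x ^+ k.+1 * gbinom n k.+1.
Proof. by []. Qed.

Lemma gbinom_small n k : (n < k)%N -> gbinom n k = 0.
Proof. by elim: n k => [|n IH] [|k] //= ltnk; rewrite !IH ?mulr0 ?addr0 // ltnW. Qed.

Lemma gbinomnn n : gbinom n n = 1.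
Proof. by elim: n => //= n ->; rewrite gbinom_small // mulr0 addr0. Qed.

Lemma gbinom_alt_sum n :
  \sum_(k < n.+1) (-1) ^+ k * x ^+ 'C(k, 2) * gbinom n k = (n == 0%N)%:R.
Proof.
case: n => [|n]; first by rewrite big_ord1 /= mul1r mulr1.
pose T k := (-1) ^+ k * x ^+ 'C(k.+1, 2) * gbinom n k.
have telescopes k : (-1) ^+ k.+1 * x ^+ 'C(k.+1, 2) * gbinom n.+1 k.+1 = T k.+1 - T k.
  by rewrite gbinomS /T (binS k.+1 1) bin1 exprD !exprS; ring.
rewrite big_ord_recl; under eq_bigr => k _ do rewrite lift0 telescopes.
rewrite -(big_mkord xpredT (fun k => T k.+1 - T k)) telescope_sumr //.
by rewrite /T (gbinom_small (ltnSn n)) !gbinom0 /= !mulr1 mulr0 addrC subrK.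
Qed.

Lemma gbinom_hockeystick M m :
  \sum_(t < m.+1) x ^+ t * gbinom (M + t) t = gbinom (M.+1 + m) m.
Proof.
elim: m => [|m IH]; first by rewrite big_ord1 mul1r !gbinom0.
by rewrite big_ord_recr /= IH !addnS addSn gbinomS.
Qed.

Lemma coef_prod_inv1m j s M m :
  ps_prod [seq ps_inv1m (x ^+ (r + j)) | r <- iota s M.+1] m
  = x ^+ ((s + j) * m) * gbinom (M + m) m.
Proof.
elim: M s m => [|M IH] s m.
  rewrite /= /ps_mul big_ord_recr /= big1 => [|k _].
    by rewrite add0r subnn /ps_one mulr1 gbinomnn mulr1 exprM.
  by rewrite /ps_one subn_eq0 leqNgt ltn_ord mulr0.
have ps_prod_cons f l : ps_prod (f :: l) = ps_mul f (ps_prod l) by [].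
rewrite -[iota s M.+2]/(s :: iota s.+1 M.+1) map_cons ps_prod_cons /ps_mul.
rewrite -gbinom_hockeystick (reindex_inj rev_ord_inj) mulr_sumr.
apply: eq_bigr => k _.
have km : (k <= m)%N by rewrite -ltnS.
have -> : (m - rev_ord k = k)%N by rewrite /= subSS subKn.
rewrite IH /ps_inv1m /= subSS !mulrA -!exprM -!exprD.
by congr (_ ^+ _ * _); nia.
Qed.

End GaussianBinomial.

Lemma q_neq0 : q != 0.
Proof. by rewrite tofrac_eq0 polyX_eq0. Qed.

Lemma qint0 : qint 0 = 0. Proof. by rewrite /qint big_ord0. Qed.

Lemma qintD a b : qint (a + b) = qint a + q ^+ a * qint b.
Proof.
rewrite /qint big_split_ord /= mulr_sumr; congr (_ + _).
by apply: eq_bigr => i _; rewrite exprD.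
Qed.

Lemma qint_neq0 s : (0 < s)%N -> qint s != 0.
Proof.
case: s => // s _.
have -> : qint s.+1 = tofrac (\sum_(t < s.+1) ('X : {poly int}) ^+ t).
  by rewrite rmorph_sum; apply: eq_bigr => i _; rewrite rmorphXn.
rewrite tofrac_eq0; apply/eqP => /(congr1 (coefp 0)) /=.
rewrite coef_sum big_ord_recl coefXn big1 ?coef0 ?addr0 // => i _.
by rewrite coefXn.
Qed.

Lemma qfact0 : qfact 0 = 1. Proof. by rewrite /qfact big_geq. Qed.

Lemma qfactS n : qfact n.+1 = qfact n * qint n.+1.
Proof. by rewrite /qfact big_nat_recr. Qed.

Lemma qfact_neq0 n : qfact n != 0.
Proof.
elim: n => [|n IH]; first by rewrite qfact0 oner_neq0.
by rewrite qfactS mulf_neq0 ?qint_neq0.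
Qed.

Lemma gbinom_fact n k :
  (k <= n)%N -> gbinom q n k * qfact k * qfact (n - k) = qfact n.
Proof.
elim: n k => [|n IH] [|k] // lekn; rewrite ?gbinom0 ?qfact0 ?subn0 ?mul1r //.
have left : gbinom q n k * qfact k.+1 * qfact (n - k) = qfact n * qint k.+1.
  by rewrite qfactS -(IH k lekn); ring.
have right : q ^+ k.+1 * gbinom q n k.+1 * qfact k.+1 * qfact (n - k)
           = qfact n * (q ^+ k.+1 * qint (n - k)).
  case: (ltnP k n) => [ltkn | lenk].
    by rewrite -(subnSK ltkn) [qfact (n - _).+1]qfactS -(IH k.+1 ltkn); ring.
  have -> : (n - k = 0)%N by apply/eqP; rewrite subn_eq0.
  by rewrite gbinom_small ?ltnS // qint0 !(mulr0, mul0r).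
by rewrite gbinomS subSS !mulrDl left right -mulrDr -qintD addSn subnKC // qfactS.
Qed.

Lemma qbinomE n k : (k <= n)%N -> qbinom n k = gbinom q n k.
Proof.
move=> lekn; rewrite /qbinom -(gbinom_fact lekn) -mulrA mulfK //.
by rewrite mulf_neq0 ?qfact_neq0.
Qed.

(* Both sides equal [j+n]! / ([j]! [k]! [n-k]!). *)
Lemma gbinom_trinomial j n k : (k <= n)%N ->
  gbinom q (k + j) j * gbinom q (j + n) (n - k) = gbinom q (j + n) n * gbinom q n k.
Proof.
move=> lekn.
have f_kj := gbinom_fact (leq_addl k j); rewrite addnK in f_kj.
have f_jn := gbinom_fact (leq_addl j n); rewrite addnK in f_jn.
have f_nk := gbinom_fact lekn.
have f_jnk : gbinom q (j + n) (n - k) * qfact (n - k) * qfact (k + j) = qfact (j + n).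
  by rewrite -[in qfact (k + j)](_ : j + n - (n - k) = k + j)%N ?gbinom_fact //; lia.
apply: (@mulIf _ (qfact j * qfact k * qfact (n - k))).
  by rewrite !mulf_neq0 ?qfact_neq0.
transitivity (qfact (j + n)).
  by rewrite -f_jnk -f_kj; ring.
by rewrite -f_jn -f_nk; ring.
Qed.

Lemma coef_summand j n k : (k <= n)%N ->
  (-1) ^+ (k + j) * q ^+ 'C((k + j).+1, 2) * qbinom (k + j) j *
    ps_yshift (k + j - j)
      (ps_prod [seq ps_inv1m (q ^+ (r + j)) | r <- iota 1 (k + j).+1]) n
  = (-1) ^+ j * q ^+ 'C(j.+1, 2) * q ^+ (j.+1 * n) * gbinom q (j + n) n *
    ((-1) ^+ k * q ^+ 'C(k, 2) * gbinom q n k).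
Proof.
move=> lekn.
have q_exponent : q ^+ 'C((k + j).+1, 2) * q ^+ ((1 + j) * (n - k))
                  = q ^+ 'C(j.+1, 2) * q ^+ (j.+1 * n) * q ^+ 'C(k, 2).
  by rewrite -!exprD -addnS bin2D; congr (_ ^+ _); nia.
rewrite /ps_yshift addnK lekn coef_prod_inv1m qbinomE ?leq_addl //.
rewrite (_ : k + j + (n - k) = j + n)%N; last by lia.
transitivity ((-1) ^+ k * (-1) ^+ j *
  (q ^+ 'C((k + j).+1, 2) * q ^+ ((1 + j) * (n - k))) *
  (gbinom q (k + j) j * gbinom q (j + n) (n - k))).
  by rewrite (exprD (-1 : Kq)); ring.
by rewrite q_exponent gbinom_trinomial //; ring.
Qed.

Theorem mainTheorem7 (j : nat) :
  ps_scale ((-1) ^+ j * q ^ (- ('C(j.+1, 2))%:Z))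
    (ps_ysum_from j (fun i =>
       ps_scale ((-1) ^+ i * q ^+ 'C(i.+1, 2) * qbinom i j)
         (ps_yshift (i - j)
            (ps_prod [seq ps_inv1m (q ^+ (r + j)) | r <- iota 1 i.+1]))))
  = @ps_one Kq.
Proof.
apply: functional_extensionality => n.
rewrite /ps_scale /ps_ysum_from (big_addn 0 (j + n.+1) j) addKn big_mkord.
under eq_bigr => k _ do rewrite (coef_summand j (leq_ord k)).
rewrite -mulr_sumr gbinom_alt_sum /ps_one.
case: n => [|n]; last by rewrite !mulr0.
rewrite muln0 addn0 gbinom0 expr0 -exprnN !mulr1 mulrACA -exprMn mulrNN mulr1 expr1n mul1r.
by rewrite mulVf // expf_neq0 // q_neq0.
Qed.
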